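(* For every knot diagram $D$ and every Dehn $p$-coloring $C$ of $D$, $\partial_2^{\rm SLB}(W(D,C))=0$ in $C_1^{\rm SLB}(\mathbb Z_p)$.
   Context: Let $p$ be an odd prime, $X=\mathbb Z_p$, $[a,b,c]=a-b+c$, $\rho((a,b))=(b,a)$, $(a,b)\,\underline{\star}\,(a,c)=(c,[a,b,c])$, $(a,b)\,\overline{\star}\,(a,c)=(c,[a,c,b])$. For $n\ge1$ let $C_n^{\rm lb}(X)$ be the free abelian group on tuples $((a,b_1),\dots,(a,b_n))$, $a,b_i\in X$ (zero for $n\le 0$), with $\partial_n^{\rm lb}$ for $n\ge 2$ given by $\sum_{i=1}^n(-1)^i\{((a,b_1),\dots,\widehat{(a,b_i)},\dots,(a,b_n))-((b_i,[a,b_1,b_i]),\dots,(b_i,[a,b_{i-1},b_i]),(b_i,[a,b_i,b_{i+1}]),\dots,(b_i,[a,b_i,b_n]))\}$ and $\partial_n^{\rm lb}=0$ for $n\le1$; in particular $\partial_2^{\rm lb}((a,b),(a,c))=-(a,c)+(a,b)+(b,[a,b,c])-(c,[a,b,c])$. Let $D_n^{\rm lb}(X)$ be generated by tuples with $b_i=b_{i+1}$ for some $i$, $D_n^{\rm lb}(X,\rho)$ generated by all $((a,b_1),\dots,(a,b_n))+((a,b_1)\underline\star(a,b_i),\dots,(a,b_{i-1})\underline\star(a,b_i),\rho((a,b_i)),(a,b_{i+1})\overline\star(a,b_i),\dots,(a,b_n)\overline\star(a,b_i))$; $C_n^{\rm SLB}(X)=C_n^{\rm lb}(X)/(D_n^{\rm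 lb}(X)+D_n^{\rm lb}(X,\rho))$ with induced boundary $\partial_n^{\rm SLB}$. Dehn $p$-colorings: for a knot diagram $D$ with region set $\mathcal R(D)$, at each crossing label the four regions $x_1,x_2,x_3,x_4$ so that $x_2$ is adjacent to $x_1$ across an under-arc, $x_3$ adjacent to $x_1$ across the over-arc, $x_4$ opposite $x_1$; a Dehn $p$-coloring is $C:\mathcal R(D)\to\mathbb Z_p$ with $C(x_1)+C(x_3)=C(x_2)+C(x_4)$ at every crossing. At each crossing $\chi$ choose a specified region $x_1$, put $a=C(x_1),b=C(x_2),c=C(x_3)$ and $w_\chi=\varepsilon((a,b),(a,c))\in C_2^{\rm SLB}(X)$, with $\varepsilon=+1$ if $(n_o,n_u)$ is a positively oriented basis of $\mathbb R^2$ and $-1$ otherwise ($n_u$ the normal vector from $x_1$ to $x_2$, $n_o$ from $x_1$ to $x_3$). $W(D,C)=\sum_\chi w_\chi\in C_2^{\rm SLB}(X)$; it is independent of the choices of specified regions. *)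

From mathcomp Require Import all_boot all_order all_algebra.
Set Implicit Arguments. Unset Strict Implicit. Unset Printing Implicit Defensive.
Import GRing.Theory.
Local Open Scope ring_scope.

(* A generator ((a,b_1),...,(a,b_n)) is encoded as (a, [:: b_1;..;b_n]). *)
(* A chain (element of the free abelian group) is a formal integer      *)
(* combination, i.e. a list of (coefficient, generator); two chains are  *)
(* equal iff their coefficient functions [cf] agree.                    *)

Definition br (X : zmodType) (a b c : X) : X := a - b + c.

Definition lbgen (X : zmodType) := (X * seq X)%type.
Definition lbchain (X : zmodType) := seq (int * lbgen X).

Definition cf (X : zmodType) (z : lbchain X) (g : lbgen X) : int :=
  \sum_(kg <- z | kg.2 == g) kg.1.

Definition scale_chain (X : zmodType) (k : int) (z : lbchain X) : lbchain X :=
  [seq (k * kg.1, kg.2) | kg <- z].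

Definition lincomb (X : zmodType) (l : seq (int * lbchain X)) : lbchain X :=
  flatten [seq scale_chain kc.1 kc.2 | kc <- l].

(* (i+1)-th face: delete the (i+1)-th entry (0-based index i) *)
Definition face (X : zmodType) (g : lbgen X) (i : nat) : lbgen X :=
  (g.1, take i g.2 ++ drop i.+1 g.2).

(* (i+1)-th coface:
   ((b_i,[a,b_1,b_i]),...,(b_i,[a,b_{i-1},b_i]),(b_i,[a,b_i,b_{i+1}]),...,(b_i,[a,b_i,b_n])) *)
Definition coface (X : zmodType) (g : lbgen X) (i : nat) : lbgen X :=
  let a := g.1 in let bs := g.2 in let bi := nth 0 bs i in
  (bi, [seq br a (nth 0 bs j) bi | j <- iota 0 i]
       ++ [seq br a bi (nth 0 bs j) | j <- iota i.+1 (size bs - i.+1)]).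

Definition bd_gen (X : zmodType) (g : lbgen X) : lbchain X :=
  if (size g.2 <= 1)%N then [::] else
  flatten [seq [:: ((-1) ^+ i.+1, face g i); (- (-1) ^+ i.+1, coface g i)]
          | i <- iota 0 (size g.2)].

Definition bd (X : zmodType) (z : lbchain X) : lbchain X :=
  flatten [seq scale_chain kg.1 (bd_gen kg.2) | kg <- z].

Definition degen_rel (X : zmodType) (n : nat) (r : lbchain X) : Prop :=
  exists a bs, [/\ size bs = n,
    (exists2 i, (i.+1 < n)%N & nth 0 bs i = nth 0 bs i.+1)
    & r = [:: (1, (a, bs))]].

(* ((a,b_1)*_(a,b_i),...,rho(a,b_i),...,(a,b_n)*^-(a,b_i)) with
   (a,b)*_(a,c) = (c,[a,b,c]), (a,b)*^-(a,c) = (c,[a,c,b]), rho(a,b) = (b,a) *)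
Definition rho_gen (X : zmodType) (g : lbgen X) (i : nat) : lbgen X :=
  let a := g.1 in let bs := g.2 in let bi := nth 0 bs i in
  (bi, [seq br a (nth 0 bs j) bi | j <- iota 0 i]
       ++ a :: [seq br a bi (nth 0 bs j) | j <- iota i.+1 (size bs - i.+1)]).

Definition rho_rel (X : zmodType) (n : nat) (r : lbchain X) : Prop :=
  exists a bs i, [/\ size bs = n, (i < n)%N &
    r = [:: (1, (a, bs)); (1, rho_gen (a, bs) i)]].

(* z lies in D_n^lb(X) + D_n^lb(X,rho), i.e. z = 0 in C_n^SLB(X) *)
Definition zero_SLB (X : zmodType) (n : nat) (z : lbchain X) : Prop :=
  exists l : seq (int * lbchain X),
    (forall kr, kr \in l -> degen_rel n kr.2 \/ rho_rel n kr.2) /\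
    cf z =1 cf (lincomb l).

(* Knot diagrams as combinatorial maps on a finite set H of darts:     *)
(*  sigma = counterclockwise rotation of darts around their crossing,   *)
(*  alpha = the other half of the same edge,                           *)
(*  over d = the dart d lies on the over-arc of its crossing.          *)
(* The corner (region germ) between d and sigma d is labelled by d;    *)
(* corners d and phi d := sigma^-1 (alpha d) lie in the same region,   *)
(* and regions are the phi-orbits.                                     *)

Definition phi (H : finType) (sigma alpha : H -> H) (d : H) : H :=
  iter 3 sigma (alpha d).

(* straight-ahead continuation along a strand *)
Definition tau (H : finType) (sigma alpha : H -> H) (d : H) : H :=
  iter 2 sigma (alpha d).

Definition adj (H : finType) (sigma alpha : H -> H) : rel H :=
  fun u v => (v == sigma u) || (v == alpha u).

Definition is_knot_diagram (H : finType) (sigma alpha : H -> H) (over : H -> bool)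
  : Prop :=
  [/\ (forall d, iter 4 sigma d = d /\ iter 2 sigma d != d),
      (forall d, alpha (alpha d) = d /\ alpha d != d),
      (forall d, over (sigma d) = ~~ over d),
      (forall x y, connect (adj sigma alpha) x y) &
      (* Euler: V + F = E + 2 (genus 0, planar) *)
      (fcard sigma predT + fcard (phi sigma alpha) predT = fcard alpha predT + 2)%N
   /\ (* one component: exactly two straight-ahead orbits (two directions) *)
      fcard (tau sigma alpha) predT = 2%N].

(* The labelling of the regions around a crossing with specified corner e *)
Section Labels.
Variables (H : finType) (X : zmodType) (sigma : H -> H) (over : H -> bool)
          (col : H -> X).
Definition x1 (e : H) : X := col e.
Definition x2 (e : H) : X :=
  if over (sigma e) then col (iter 3 sigma e) else col (sigma e).
Definition x3 (e : H) : X :=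
  if over (sigma e) then col (sigma e) else col (iter 3 sigma e).
Definition x4 (e : H) : X := col (iter 2 sigma e).
(* epsilon = +1 iff (n_o, n_u) is positively oriented *)
Definition epsc (e : H) : int := if over (sigma e) then 1 else -1.
End Labels.

(* col (a function on corners, constant on regions) is a Dehn coloring *)
Definition is_dehn_coloring (H : finType) (X : zmodType) (sigma alpha : H -> H)
  (over : H -> bool) (col : H -> X) : Prop :=
  (forall d, col (phi sigma alpha d) = col d) /\
  (forall e, x1 col e + x3 sigma over col e = x2 sigma over col e + x4 sigma col e).

Definition is_spec (H : finType) (sigma : H -> H) (S : {set H}) : Prop :=
  forall d, #|[set k : 'I_4 | iter k sigma d \in S]| = 1%N.

Definition W (H : finType) (X : zmodType) (sigma : H -> H) (over : H -> bool)
  (col : H -> X) (S : {set H}) : lbchain X :=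
  [seq (epsc sigma over e, (x1 col e, [:: x2 sigma over col e; x3 sigma over col e]))
  | e <- enum S].

From mathcomp Require Import all_boot all_order all_algebra.
From mathcomp Require Import ring.
Set Implicit Arguments. Unset Strict Implicit. Unset Printing Implicit Defensive.
Import GRing.Theory.
Local Open Scope ring_scope.

(* Write <f> for the 1-chain (C f, C (sigma^3 f)) attached to the corner f.
   At a crossing with specified corner e the generator ((a,b),(a,c)) has
   boundary -(a,c) + (a,b) + (b,d) - (c,d) with d = [a,b,c] the colour of the
   opposite corner, by the Dehn condition.  Since (x,y) + (y,x) vanishes in
   C_1^SLB (the rho-relation in degree 1), eps times this boundary equals
   <e> + <sigma e> + <sigma^2 e> + <sigma^3 e> there.  Summing over crossings
   counts every corner once, and the corners f and alpha f at the two ends of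
   an edge give mutually reversed chains because C is constant on regions, so
   the total is again a sum of rho-relations.  Nothing about p is used: any
   abelian group of colours works. *)

Section ChainCoefficients.
Variable X : zmodType.
Implicit Types (z : lbchain X) (g h : lbgen X).

Definition kdelta h g : int := (h == g)%:R.

Lemma cf_nil g : cf ([::] : lbchain X) g = 0.
Proof. by rewrite /cf big_nil. Qed.

Lemma cf_cons k h z g : cf ((k, h) :: z) g = k * kdelta h g + cf z g.
Proof. by rewrite /cf big_cons /kdelta; case: (h == g); rewrite ?mulr1 ?mulr0 ?add0r. Qed.

Lemma cf_cat z1 z2 g : cf (z1 ++ z2) g = cf z1 g + cf z2 g.
Proof. by rewrite /cf big_cat. Qed.

Lemma cf_flatten (zs : seq (lbchain X)) g :
  cf (flatten zs) g = \sum_(z <- zs) cf z g.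
Proof.
elim: zs => [|z zs IH] /=; first by rewrite big_nil cf_nil.
by rewrite cf_cat IH big_cons.
Qed.

Lemma cf_scale_chain k z g : cf (scale_chain k z) g = k * cf z g.
Proof. by rewrite /cf /scale_chain big_map mulr_sumr. Qed.

Lemma cf_lincomb l g : cf (lincomb l) g = \sum_(kc <- l) kc.1 * cf kc.2 g.
Proof.
by rewrite /lincomb cf_flatten big_map; apply: eq_bigr => kc _; rewrite cf_scale_chain.
Qed.

Lemma cf_bd z g : cf (bd z) g = \sum_(kg <- z) kg.1 * cf (bd_gen kg.2) g.
Proof.
by rewrite /bd cf_flatten big_map; apply: eq_bigr => kg _; rewrite cf_scale_chain.
Qed.

Lemma cf_bd_gen2 a b c g : cf (bd_gen (a, [:: b; c])) g =
  - kdelta (a, [:: c]) g + kdelta (a, [:: b]) g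
  + kdelta (b, [:: br a b c]) g - kdelta (c, [:: br a b c]) g.
Proof. rewrite /bd_gen /= !cf_cons cf_nil /face /coface /=; ring. Qed.

(* [zero_SLB n z] unfolds to [slb_null n (cf z)]. *)
Definition slb_null n (F : lbgen X -> int) :=
  exists l : seq (int * lbchain X),
    (forall kr, kr \in l -> degen_rel n kr.2 \/ rho_rel n kr.2) /\
    F =1 cf (lincomb l).

Variable n : nat.

Lemma slb_null_eq F G : F =1 G -> slb_null n G -> slb_null n F.
Proof. by move=> eFG [l [rl eG]]; exists l; split=> // g; rewrite eFG eG. Qed.

Lemma slb_null0 : slb_null n (fun _ => 0).
Proof. by exists [::]; split=> // g; rewrite /lincomb cf_nil. Qed.

Lemma slb_nullD F G : slb_null n F -> slb_null n G -> slb_null n (fun g => F g + G g).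
Proof.
move=> [l1 [rl1 e1]] [l2 [rl2 e2]]; exists (l1 ++ l2); split.
  by move=> kr; rewrite mem_cat => /orP [/rl1|/rl2].
by move=> g; rewrite /lincomb map_cat flatten_cat cf_cat e1 e2.
Qed.

Lemma slb_nullZ k F : slb_null n F -> slb_null n (fun g => k * F g).
Proof.
move=> [l [rl e]]; exists [seq (k * kc.1, kc.2) | kc <- l]; split.
  by move=> kr /mapP [kc /rl ? ->].
by move=> g; rewrite e !cf_lincomb big_map mulr_sumr; apply: eq_bigr => kc _; rewrite mulrA.
Qed.

Lemma slb_nullB F G : slb_null n F -> slb_null n G -> slb_null n (fun g => F g - G g).
Proof.
move=> nullF /(slb_nullZ (-1)) nullNG.
by apply: slb_null_eq (slb_nullD nullF nullNG) => g; rewrite mulN1r.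
Qed.

Lemma slb_null_sum (I : Type) (r : seq I) (P : pred I) (F : I -> lbgen X -> int) :
  (forall i, P i -> slb_null n (F i)) ->
  slb_null n (fun g => \sum_(i <- r | P i) F i g).
Proof.
move=> nullF; elim: r => [|i r IH].
  by apply: slb_null_eq slb_null0 => g; rewrite big_nil.
case Pi: (P i); last by apply: slb_null_eq IH => g; rewrite big_cons Pi.
by apply: slb_null_eq (slb_nullD (nullF i Pi) IH) => g; rewrite big_cons Pi.
Qed.

End ChainCoefficients.

Definition rho_pair (X : zmodType) (a b : X) (g : lbgen X) : int :=
  kdelta (a, [:: b]) g + kdelta (b, [:: a]) g.

Lemma slb_null_rho_pair (X : zmodType) (a b : X) : slb_null 1 (rho_pair a b).
Proof.
exists [:: (1, [:: (1, (a, [:: b])); (1, rho_gen (a, [:: b]) 0)])]; split.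
  by move=> kr; rewrite inE => /eqP -> /=; right; exists a, [:: b], 0%N.
by move=> g; rewrite /lincomb /scale_chain /= !cf_cons cf_nil /rho_pair /rho_gen /=; ring.
Qed.

Lemma sum_fixfree_involution (V : nmodType) (T : finType) (a : T -> T) (F : T -> V) :
  involutive a -> (forall t, a t != t) ->
  \sum_t F t = \sum_(t | (enum_rank t < enum_rank (a t))%N) (F t + F (a t)).
Proof.
move=> aK a_fixfree; pose lt_a t := (enum_rank t < enum_rank (a t))%N.
rewrite big_split [LHS](bigID lt_a) /=; congr (_ + _).
rewrite (reindex_inj (inv_inj aK)); apply: eq_bigl => t; rewrite /lt_a aK.
have rank_neq : nat_of_ord (enum_rank (a t)) != enum_rank t.
  by apply: contra (a_fixfree t) => /eqP /val_inj /enum_rank_inj ->.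
by rewrite -leqNgt leq_eqVlt eq_sym (negbTE rank_neq).
Qed.

Section Crossings.
Variables (H : finType) (sigma : H -> H).
Hypothesis sigma4 : forall d, iter 4 sigma d = d.

Lemma iter_sigma_subnK k d : (k <= 4)%N -> iter k sigma (iter (4 - k) sigma d) = d.
Proof. by move=> le_k4; rewrite -iterD subnKC. Qed.

Lemma iter_sigma_subnKC k d : (k <= 4)%N -> iter (4 - k) sigma (iter k sigma d) = d.
Proof. by move=> le_k4; rewrite -iterD subnK. Qed.

Lemma sum_spec_crossings (V : nmodType) (S : {set H}) (F : H -> V) :
  is_spec sigma S -> \sum_(e in S) \sum_(k < 4) F (iter k sigma e) = \sum_d F d.
Proof.
move=> specS.
have -> : \sum_d F d = \sum_d \sum_(k < 4) if iter k sigma d \in S then F d else 0.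
  apply: eq_bigr => d _; rewrite -big_mkcond sumr_const.
  by rewrite (eq_card (B := [set k : 'I_4 | iter k sigma d \in S])) ?specS // => k; rewrite inE.
rewrite [RHS]exchange_big /=.
have -> : \sum_(k < 4) \sum_d (if iter k sigma d \in S then F d else 0) =
          \sum_(k < 4) \sum_(e in S) F (iter (4 - k) sigma e).
  apply: eq_bigr => k _; rewrite -big_mkcond (reindex (iter (4 - k) sigma)) /=.
    by apply: eq_bigl => e; rewrite iter_sigma_subnK // ltnW.
  by exists (iter k sigma) => d _; rewrite (iter_sigma_subnK, iter_sigma_subnKC) // ltnW.
rewrite [RHS]exchange_big; apply: eq_bigr => e _.
rewrite !big_ord_recl !big_ord0 /= !addr0.
have -> : sigma (sigma (sigma (sigma e))) = e := sigma4 e.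
by congr (_ + _); rewrite [LHS]addrA [LHS]addrC [in LHS](addrC (F (sigma e))).
Qed.

Variables (X : zmodType) (over : H -> bool) (col : H -> X).
Hypothesis dehn :
  forall e, x1 col e + x3 sigma over col e = x2 sigma over col e + x4 sigma col e.

Definition corner_gen (f : H) : lbgen X := (col f, [:: col (iter 3 sigma f)]).

Definition corner_pair (f : H) : lbgen X -> int :=
  rho_pair (col f) (col (iter 3 sigma f)).

Lemma epsc_cf_bd_crossing e g :
  epsc sigma over e *
    cf (bd_gen (x1 col e, [:: x2 sigma over col e; x3 sigma over col e])) g
  = \sum_(k < 4) kdelta (corner_gen (iter k sigma e)) g
    - (corner_pair (sigma e) g + corner_pair (iter 2 sigma e) g).
Proof.
have opposite : br (x1 col e) (x2 sigma over col e) (x3 sigma over col e) = x4 sigma col e.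
  by rewrite /br addrAC dehn [x2 _ _ _ _ + _]addrC addrK.
have sigma4' d : sigma (sigma (sigma (sigma d))) = d := sigma4 d.
rewrite cf_bd_gen2 opposite !big_ord_recl big_ord0 /corner_pair /rho_pair /corner_gen /=.
by rewrite /x1 /x2 /x3 /x4 /epsc !sigma4'; case: (over (sigma e)); ring.
Qed.

End Crossings.

Lemma slb_null_sum_corners (X : zmodType) (H : finType) (sigma alpha : H -> H)
    (over : H -> bool) (col : H -> X) :
  (forall d, alpha (alpha d) = d /\ alpha d != d) ->
  is_dehn_coloring sigma alpha over col ->
  slb_null 1 (fun g => \sum_f kdelta (corner_gen sigma col f) g).
Proof.
move=> alpha_edge [col_phi _].
have alphaK : involutive alpha by move=> d; case: (alpha_edge d).
pose G g := \sum_(f | (enum_rank f < enum_rank (alpha f))%N) corner_pair sigma col f g.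
apply: (@slb_null_eq _ _ _ G); last by apply: slb_null_sum => f _; apply: slb_null_rho_pair.
move=> g; rewrite (sum_fixfree_involution _ alphaK) => [|d]; last by case: (alpha_edge d).
apply: eq_bigr => f _; rewrite /corner_pair /rho_pair /corner_gen.
have col_alpha : col (alpha f) = col (iter 3 sigma f).
  by rewrite -(col_phi (alpha f)) /phi alphaK.
by rewrite col_alpha (col_phi f).
Qed.

Theorem lemma4p2 (p : nat) (Hp : prime p) (Hodd : odd p)
  (H : finType) (sigma alpha : H -> H) (over : H -> bool)
  (hD : is_knot_diagram sigma alpha over)
  (col : H -> 'Z_p) (hC : is_dehn_coloring sigma alpha over col)
  (S : {set H}) (hS : is_spec sigma S) :
  zero_SLB 1 (bd (W sigma over col S)).
Proof.
case: hD => valence alpha_edge _ _ _.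
have sigma4 d : iter 4 sigma d = d by case: (valence d).
have dehn := proj2 hC.
suff : slb_null 1 (cf (bd (W sigma over col S))) by [].
apply: (@slb_null_eq _ _ _ (fun g => \sum_f kdelta (corner_gen sigma col f) g
   - \sum_(e in S) (corner_pair sigma col (sigma e) g
                    + corner_pair sigma col (iter 2 sigma e) g))).
  move=> g; rewrite cf_bd /W big_map big_enum /=.
  rewrite (eq_bigr _ (fun e _ => epsc_cf_bd_crossing sigma4 dehn e g)).
  rewrite sumrB.
  by rewrite (sum_spec_crossings sigma4 (fun f => kdelta (corner_gen sigma col f) g) hS).
apply: slb_nullB; first exact: slb_null_sum_corners alpha_edge hC.
apply: slb_null_sum => e _.
by apply: slb_nullD; apply: slb_null_rho_pair.
Qed.
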